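(* Let $1\le k<n$ and let $T\colon\mathbb{H}_n\to\mathbb{H}_n$ be a bijective $\mathbb{R}$-linear map. Suppose $P_1,P_2$ are rank-$k$ orthogonal projections with $\operatorname{span}_{\mathbb{R}}S^{\mathbb{H}}(P_1)\neq\operatorname{span}_{\mathbb{R}}S^{\mathbb{H}}(P_2)$, and let $\theta_1,\theta_2\in\{-1,1\}$. Then there do not exist a rank-$k$ orthogonal projection $Q$ and $\theta_3\in\{-1,1\}$ such that $T(\theta_1S^{\mathbb{H}}(P_1))\cup T(\theta_2S^{\mathbb{H}}(P_2))\subseteq\theta_3S^{\mathbb{H}}(Q)$.
   Context: $\mathbb{H}_n$ is the real space of $n\times n$ Hermitian matrices. $w_k(A)=\max\{|\operatorname{tr}(AP)|: P=P^*=P^2,\operatorname{tr}P=k\}$. For a rank-$k$ orthogonal projection $P$, $S^{\mathbb{H}}(P)=\{B\in\mathbb{H}_n:\operatorname{tr}(BP)=w_k(B)\}$. *)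

From mathcomp Require Import all_boot all_algebra.
From mathcomp Require Import all_classical all_reals.
From mathcomp.real_closed Require Import complex.
Set Implicit Arguments. Unset Strict Implicit. Unset Printing Implicit Defensive.
Import GRing.Theory Num.Theory.
Local Open Scope ring_scope.
Local Open Scope classical_set_scope.

Section Defs.
Variables (R : realType) (n : nat).
Local Notation C := (R[i]).
Local Notation M := ('M[C]_n).

Definition adjmx (A : M) : M := (map_mx (@conjc R) A)^T.

Definition hermitian (A : M) : Prop := adjmx A = A.

Definition rC (r : R) : C := Complex r 0.

Definition rank_proj (k : nat) (P : M) : Prop :=
  adjmx P = P /\ P *m P = P /\ \tr P = (k%:R : C).

Definition wk (k : nat) (A : M) : R :=
  sup [set Normc.normc (\tr (A *m P)) | P in [set P | rank_proj k P]].

Definition SH (k : nat) (P : M) : set M :=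
  [set B | hermitian B /\ \tr (B *m P) = rC (wk k B)].

Definition spanR (S : set M) : set M :=
  [set A | exists (m : nat) (r : 'I_m -> R) (B : 'I_m -> M),
     (forall i, S (B i)) /\ A = \sum_(i < m) rC (r i) *: B i].

Definition scaleset (t : R) (S : set M) : set M := [set rC t *: B | B in S].

(* T : H_n -> H_n is a bijective R-linear map (T is given on all matrices,
   only its behaviour on H_n matters) *)
Definition herm_linear_bij (T : M -> M) : Prop :=
  (forall A, hermitian A -> hermitian (T A)) /\
  (forall A B, hermitian A -> hermitian B -> T (A + B) = T A + T B) /\
  (forall (r : R) A, hermitian A -> T (rC r *: A) = rC r *: T A) /\
  (forall A B, hermitian A -> hermitian B -> T A = T B -> A = B) /\
  (forall B, hermitian B -> exists A, hermitian A /\ T A = B).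
End Defs.

(* If T maps theta1 S(P1) and theta2 S(P2) into theta3 S(Q), then, as theta^2 = 1,
   T maps span S(P1) and span S(P2) into span S(Q).  Any two rank-k projections
   are unitarily similar (spectral theorem and a permutation of the 0/1 diagonal),
   and since w_k is unitarily invariant, conjugation by a unitary W maps S(P)
   into S(W P W^* ); so all the spaces span S(P) have the same real dimension.
   An injective linear map between spaces of equal finite dimension is onto,
   hence span S(P1) = T^-1(span S(Q)) = span S(P2), a contradiction. *)

From Pilot Require Import Defs.
From mathcomp Require Import all_boot all_algebra all_fingroup.
From mathcomp Require Import all_classical all_reals.
From mathcomp.real_closed Require Import complex.
From mathcomp Require Import spectral zify.

Set Implicit Arguments.
Unset Strict Implicit.
Unset Printing Implicit Defensive.

Import GRing.Theory Num.Theory.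
Local Open Scope ring_scope.
Local Open Scope classical_set_scope.
Local Open Scope sesquilinear_scope.

Section VectorSubspaces.
Variables (K : fieldType) (V : vectType K).

Lemma lin_closed_vspace (Z : set V) :
  Z 0 -> (forall a u v, Z u -> Z v -> Z (a *: u + v)) ->
  exists U : {vspace V}, forall v, v \in U <-> Z v.
Proof.
move=> Z0 Zlin.
have Zsum m (c : 'I_m -> K) (x : 'I_m -> V) :
    (forall i, Z (x i)) -> Z (\sum_(i < m) c i *: x i).
  move=> Zx; elim/big_ind: _ => // [u v Zu Zv|i _].
    by rewrite -[u]scale1r; apply: Zlin.
  by rewrite -[_ *: _]addr0; apply: Zlin.
pose dimZ m := `[< exists s : seq V, (forall x, x \in s -> Z x) /\ \dim <<s>>%VS = m >].
have dimZ0 : dimZ 0%N by apply/asboolP; exists [::]; rewrite span_nil dimv0.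
have dimZ_bound m : dimZ m -> (m <= \dim {:V})%N.
  by move=> /asboolP [s [_ <-]]; apply/dimvS/subvf.
have [m /asboolP [s [sZ <-]] s_max] := ex_maxnP (ex_intro _ 0%N dimZ0) dimZ_bound.
exists <<s>>%VS => v; split.
  move=> /(@vector.coord_span _ _ _ (in_tuple s)) ->; apply: Zsum => i.
  by apply: sZ; apply: mem_nth.
(* a vector of Z outside <<s>> would give a family of larger dimension *)
move=> Zv; apply/negPn/negP => vNs.
have /s_max : dimZ (\dim <<v :: s>>%VS).
  apply/asboolP; exists (v :: s); split => // x.
  by rewrite inE => /predU1P [->|/sZ].
have sub_s : (<<s>> <= <<v :: s>>)%VS by apply: sub_span => x xs; rewrite inE xs orbT.
rewrite leqNgt (ltn_leqif (dimv_leqif_sup sub_s)) => /negP; apply.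
by apply: contra vNs => /subvP; apply; apply/memv_span/mem_head.
Qed.

Variables (X Y : {vspace V}) (g : V -> V).
Hypothesis g_lin : forall a {u v}, u \in X -> v \in X -> g (a *: u + v) = a *: g u + g v.
Hypothesis g_inj : {in X &, injective g}.
Hypothesis g_XY : forall x, x \in X -> g x \in Y.

Let g0 : g 0 = 0.
Proof.
by have := g_lin (-1) (mem0v X) (mem0v X); rewrite scaler0 addr0 scaleN1r addNr.
Qed.

Let g_sum m (c : 'I_m -> K) (x : 'I_m -> V) : (forall i, x i \in X) ->
  g (\sum_(i < m) c i *: x i) = \sum_(i < m) c i *: g (x i).
Proof.
elim: m c x => [|m IH] c x Xx; first by rewrite !big_ord0 g0.
rewrite !big_ord_recr /= addrC g_lin //; last by apply: memv_suml => i _; apply/memvZ/Xx.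
by rewrite IH // addrC.
Qed.

Let gb := map_tuple g (vbasis X).

Let gbE (i : 'I_(\dim X)) : gb`_i = g (vbasis X)`_i.
Proof. by rewrite (nth_map 0) // size_tuple. Qed.

Let vbasisX i : (vbasis X)`_i \in X.
Proof.
have [ib|ib] := ltnP i (size (vbasis X)); first exact/vbasis_mem/mem_nth.
by rewrite nth_default // mem0v.
Qed.

Let free_gb : free gb.
Proof.
apply/freeP => c gc0 i.
have Xsum : \sum_(j < \dim X) c j *: (vbasis X)`_j \in X.
  by apply: memv_suml => j _; apply/memvZ/vbasisX.
have /(g_inj Xsum (mem0v _)) sum0 : g (\sum_(j < \dim X) c j *: (vbasis X)`_j) = g 0.
  rewrite g_sum // g0 -[RHS]gc0.
  by apply: eq_bigr => j _; rewrite gbE.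
by move/freeP: (basis_free (vbasisP X)) => /(_ c sum0 i).
Qed.

Let span_gb : (<<gb>> <= Y)%VS.
Proof. by apply/span_subvP => _ /mapP [x /vbasis_mem Xx ->]; apply: g_XY. Qed.

Lemma dimv_leq_inj_on : (\dim X <= \dim Y)%N.
Proof.
have <- : \dim <<gb>> = \dim X by rewrite (eqnP free_gb) size_tuple.
exact: dimvS span_gb.
Qed.

Lemma inj_on_onto : (\dim Y <= \dim X)%N ->
  forall y, y \in Y -> exists2 x, x \in X & g x = y.
Proof.
move=> leYX y; have gbY : basis_of Y gb.
  by rewrite basisEfree free_gb span_gb size_tuple.
rewrite -(span_basis gbY) => /vector.coord_span ->.
exists (\sum_(i < \dim X) coord gb i y *: (vbasis X)`_i).
  by apply: memv_suml => i _; apply/memvZ/vbasisX.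
by rewrite g_sum //; apply: eq_bigr => i _; rewrite gbE.
Qed.

End VectorSubspaces.

Section TwoValued.
Variables (T : eqType) (x y : T).
Hypothesis xy : x != y.

Lemma count_two_valued (a : pred T) (s : seq T) : all (mem [:: x; y]) s ->
  count a s = (a x * count_mem x s + a y * (size s - count_mem x s))%N.
Proof.
elim: s => [|z s IH] /=; first by rewrite !muln0.
move=> /andP [z_xy /IH ->]; have := count_size (pred1 x) s.
rewrite !inE in z_xy; case/orP: z_xy => /eqP -> /=; rewrite ?eqxx 1?eq_sym ?(negPf xy);
  by case: (a x); case: (a y) => /=; lia.
Qed.

Lemma perm_two_valued n (f g : 'I_n -> T) :
  (forall i, f i \in [:: x; y]) -> (forall i, g i \in [:: x; y]) ->
  count_mem x [tuple f i | i < n] = count_mem x [tuple g i | i < n] ->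
  exists s : 'S_n, forall i, g i = f (s i).
Proof.
have all_xy (h : 'I_n -> T) : (forall i, h i \in [:: x; y]) ->
    all (mem [:: x; y]) [tuple h i | i < n].
  by move=> hxy; apply/allP => _ /mapP [i _ ->]; apply: hxy.
move=> fxy gxy cfg.
have /tuple_permP [s gfs] : perm_eq [tuple g i | i < n] [tuple f i | i < n].
  apply/seq.permP => a.
  rewrite (count_two_valued a (all_xy _ gxy)) (count_two_valued a (all_xy _ fxy)).
  by rewrite !size_tuple cfg.
exists s => i; have := congr1 (fun t => nth x t i) gfs.
by rewrite !nth_mktuple tnth_mktuple.
Qed.

End TwoValued.

Lemma sum_zero_one (F : nzSemiRingType) (s : seq F) :
  all (mem [:: 1; 0]) s -> \sum_(z <- s) z = (count_mem 1 s)%:R.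
Proof.
elim: s => [|z s IH] /=; first by rewrite big_nil.
move=> /andP [+ /IH IHs]; rewrite big_cons IHs !inE => /orP [] /eqP ->.
  by rewrite eqxx natrD.
by rewrite eq_sym oner_eq0 add0r.
Qed.

Lemma conjcE (R : rcfType) (x : R[i]) : Num.conj x = conjc x.
Proof.
rewrite {1}[x]complexE complexRe complexIm complexiE conjC_rect ?Creal_Re ?Creal_Im //.
rewrite -complexRe -complexIm -complexiE.
by case: x => a b /=; simpc.
Qed.

Section HermitianMatrices.
Variables (R : realType) (n : nat).
Local Notation C := R[i].
Local Notation M := 'M[C]_n.
Local Notation herm := (@Defs.hermitian R n).

Lemma rC1 : rC 1 = 1 :> C. Proof. by []. Qed.

Lemma rCM (a b : R) : rC (a * b) = rC a * rC b.
Proof. exact: (rmorphM (@real_complex R)). Qed.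

Lemma conjC_rC (r : R) : Num.conj (rC r) = rC r.
Proof. by rewrite conjcE /= oppr0. Qed.

Lemma adjmxE (A : M) : adjmx A = A ^t*.
Proof. by apply/matrixP => i j; rewrite !mxE conjcE. Qed.

Lemma herm0 : herm 0.
Proof. by rewrite /Defs.hermitian adjmxE trmx0 map_mx0. Qed.

Lemma herm_lin a (A B : M) : herm A -> herm B -> herm (rC a *: A + B).
Proof.
rewrite /Defs.hermitian !adjmxE => hA hB.
by rewrite linearD linearZ /= map_mxD map_mxZ /= conjC_rC hA hB.
Qed.

Lemma hermZ a (A : M) : herm A -> herm (rC a *: A).
Proof. by move=> hA; rewrite -[_ *: _]addr0; apply: herm_lin hA herm0. Qed.

Lemma spanR_ind (S Z : set M) :
  Z 0 -> (forall a A B, Z A -> Z B -> Z (rC a *: A + B)) ->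
  (forall B, S B -> Z B) -> forall A, spanR S A -> Z A.
Proof.
move=> Z0 Zlin SZ _ [m [r [B [SB ->]]]]; elim/big_ind: _ => // [A1 A2 ZA1 ZA2|i _].
  by move: (Zlin 1 _ _ ZA1 ZA2); rewrite rC1 scale1r.
by rewrite -[_ *: _]addr0; apply: Zlin => //; apply: SZ.
Qed.

Lemma spanR0 (S : set M) : spanR S 0.
Proof. by exists 0%N, (fun _ => 0), (fun _ => 0); split => [[]|]; rewrite ?big_ord0. Qed.

Lemma spanR_sub (S : set M) B : S B -> spanR S B.
Proof.
by move=> SB; exists 1%N, (fun _ => 1), (fun _ => B); rewrite big_ord1 rC1 scale1r.
Qed.

Lemma spanR_lin (S : set M) a A B :
  spanR S A -> spanR S B -> spanR S (rC a *: A + B).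
Proof.
case=> [m1 [r1 [B1 [SB1 ->]]]] [m2 [r2 [B2 [SB2 ->]]]].
exists (m1 + m2)%N,
  (fun i => match fintype.split i with inl j => a * r1 j | inr j => r2 j end),
  (fun i => match fintype.split i with inl j => B1 j | inr j => B2 j end).
split; first by move=> i; case: fintype.split.
rewrite big_split_ord /= scaler_sumr; congr (_ + _); apply: eq_bigr => i _.
  by rewrite (unsplitK (inl _ i)) scalerA rCM.
by rewrite (unsplitK (inr _ i)).
Qed.

Lemma spanRZ (S : set M) a A : spanR S A -> spanR S (rC a *: A).
Proof. by move=> SA; rewrite -[_ *: _]addr0; apply/spanR_lin/spanR0. Qed.

Lemma SH_herm k P B : SH k P B -> herm B.
Proof. by case. Qed.

Lemma spanSH_herm k P A : spanR (SH k P) A -> herm A.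
Proof.
by apply: spanR_ind => [|a B1 B2|B /SH_herm]; [exact: herm0 | exact: herm_lin |].
Qed.

(* [{vspace _}] needs a [vectType] over [R], whereas 'M[C]_n is one over [C]:
   real subspaces of 'M[C]_n are transported to pairs of real matrices. *)
Local Notation RM := ('M[R]_n * 'M[R]_n)%type.

Definition reim_mx (A : M) : RM := (map_mx (@complex.Re R) A, map_mx (@complex.Im R) A).
Definition cplx_mx (v : RM) : M := \matrix_(i, j) Complex (v.1 i j) (v.2 i j).

Lemma reim_mxK : cancel reim_mx cplx_mx.
Proof. by move=> A; apply/matrixP => i j; rewrite !mxE; case: (A i j). Qed.

Lemma cplx_mxK : cancel cplx_mx reim_mx.
Proof. by case=> a b; congr pair; apply/matrixP => i j; rewrite !mxE. Qed.

Lemma cplx_mx_lin a u v : cplx_mx (a *: u + v) = rC a *: cplx_mx u + cplx_mx v.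
Proof.
apply/matrixP => i j; rewrite !mxE /=.
by case: u v => [u1 u2] [v1 v2] /=; simpc.
Qed.

Lemma reim_mx_lin a A B : reim_mx (rC a *: A + B) = a *: reim_mx A + reim_mx B.
Proof. by apply: (can_inj cplx_mxK); rewrite cplx_mx_lin !reim_mxK. Qed.

Definition is_vspace_of (Z : set M) (U : {vspace RM}) :=
  forall A, reim_mx A \in U <-> Z A.

Lemma exists_vspace_of (Z : set M) : Z 0 ->
  (forall a A B, Z A -> Z B -> Z (rC a *: A + B)) ->
  exists U, is_vspace_of Z U.
Proof.
move=> Z0 Zlin; have [|a u v|U ZU] := @lin_closed_vspace _ _ (Z \o cplx_mx).
- by rewrite /= (_ : cplx_mx 0 = 0) //; apply/matrixP => i j; rewrite !mxE.
- by rewrite /= cplx_mx_lin; apply: Zlin.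
by exists U => A; rewrite ZU /= reim_mxK.
Qed.

Section InjectiveTransfer.
Variables (ZX ZY : set M) (X Y : {vspace RM}) (f : M -> M).
Hypotheses (XZ : is_vspace_of ZX X) (YZ : is_vspace_of ZY Y).
Hypothesis f_lin :
  forall a A B, ZX A -> ZX B -> f (rC a *: A + B) = rC a *: f A + f B.
Hypothesis f_inj : forall A B, ZX A -> ZX B -> f A = f B -> A = B.
Hypothesis f_ZXY : forall A, ZX A -> ZY (f A).

Let g v := reim_mx (f (cplx_mx v)).

Let ZX_cplx v : v \in X -> ZX (cplx_mx v).
Proof. by rewrite -XZ cplx_mxK. Qed.

Let g_lin a u v : u \in X -> v \in X -> g (a *: u + v) = a *: g u + g v.
Proof.
by move=> /ZX_cplx Xu /ZX_cplx Xv; rewrite /g cplx_mx_lin f_lin // reim_mx_lin.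
Qed.

Let g_inj : {in X &, injective g}.
Proof.
move=> u v /ZX_cplx Xu /ZX_cplx Xv /(can_inj reim_mxK) /(f_inj Xu Xv).
by move/(can_inj cplx_mxK).
Qed.

Let g_XY v : v \in X -> g v \in Y.
Proof. by move=> /ZX_cplx /f_ZXY; rewrite -YZ. Qed.

Lemma dimv_leq_of_inj : (\dim X <= \dim Y)%N.
Proof. exact: dimv_leq_inj_on g_lin g_inj g_XY. Qed.

Lemma onto_of_dimv_leq : (\dim Y <= \dim X)%N ->
  forall B, ZY B -> exists2 A, ZX A & f A = B.
Proof.
move=> leYX B /YZ /(inj_on_onto g_lin g_inj g_XY leYX) [v /ZX_cplx Xv gv].
by exists (cplx_mx v) => //; apply: (can_inj reim_mxK).
Qed.

End InjectiveTransfer.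

Definition uconj (W A : M) : M := W *m A *m W^t*.

Lemma uconj_lin W a A B : uconj W (rC a *: A + B) = rC a *: uconj W A + uconj W B.
Proof. by rewrite /uconj mulmxDr mulmxDl -scalemxAr -scalemxAl. Qed.

Lemma uconj0 W : uconj W 0 = 0.
Proof. by rewrite /uconj mulmx0 mul0mx. Qed.

Lemma uconj_comp W V A : uconj W (uconj V A) = uconj (W *m V) A.
Proof. by rewrite /uconj trmx_mul map_mxM !mulmxA. Qed.

Section Unitary.
Variable W : M.
Hypothesis W_unitary : W \is unitarymx.

Let tWW : W^t* *m W = 1%:M.
Proof. exact/mulmx1C/unitarymxP. Qed.

Lemma uconjM A B : uconj W A *m uconj W B = uconj W (A *m B).
Proof. by rewrite /uconj !mulmxA -[_ *m W^t* *m W]mulmxA tWW mulmx1. Qed.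

Lemma mxtrace_uconj A : \tr (uconj W A) = \tr A.
Proof. by rewrite /uconj mxtrace_mulC mulmxA tWW mul1mx. Qed.

Lemma uconjK : cancel (uconj W) (uconj (W^t*)).
Proof. by move=> A; rewrite /uconj trmxCK !mulmxA tWW mul1mx -mulmxA tWW mulmx1. Qed.

Lemma trmxC_uconj A : (uconj W A)^t* = uconj W (A^t*).
Proof. by rewrite /uconj !trmx_mul !map_mxM trmxCK mulmxA. Qed.

Lemma rank_proj_uconj k P : rank_proj k P -> rank_proj k (uconj W P).
Proof.
rewrite /rank_proj !adjmxE => -[hP [PP trP]].
by rewrite trmxC_uconj hP uconjM PP mxtrace_uconj.
Qed.

End Unitary.

Lemma wk_uconj k W B : W \is unitarymx -> wk k (uconj W B) = wk k B.
Proof.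
move=> uW; have uWt : W^t* \is unitarymx by rewrite trmxC_unitary.
rewrite /wk; congr sup; apply/seteqP; split => _ [P /= rP <-].
  exists (uconj (W^t*) P); first exact: (rank_proj_uconj uWt rP).
  by rewrite -[in RHS](uconjK uWt P) trmxCK (uconjM uW) (mxtrace_uconj uW).
exists (uconj W P); first exact: (rank_proj_uconj uW rP).
by rewrite (uconjM uW) (mxtrace_uconj uW).
Qed.

Lemma SH_uconj k W P B : W \is unitarymx ->
  SH k P B -> SH k (uconj W P) (uconj W B).
Proof.
move=> uW [hB trB]; split.
  by move: hB; rewrite /Defs.hermitian !adjmxE trmxC_uconj => ->.
by rewrite (uconjM uW) (mxtrace_uconj uW) trB (wk_uconj k B uW).
Qed.

Lemma spanSH_uconj k W P A : W \is unitarymx ->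
  spanR (SH k P) A -> spanR (SH k (uconj W P)) (uconj W A).
Proof.
move=> uW; apply: spanR_ind (fun A => spanR _ (uconj W A)) _ _ _ A.
- by rewrite uconj0; apply: spanR0.
- by move=> a A1 A2 h1 h2; rewrite uconj_lin; apply: spanR_lin.
by move=> B /(SH_uconj uW) /spanR_sub.
Qed.

Lemma rank_proj_diag k (P : M) : rank_proj k P ->
  exists U (d : 'rV[C]_n), [/\ U \is unitarymx, diag_mx d = uconj U P,
    forall i, d 0 i \in [:: 1; 0] & \sum_i d 0 i = k%:R].
Proof.
rewrite /rank_proj adjmxE => -[adjP [PP trP]].
have Pdiag : P = (spectralmx P)^t* *m diag_mx (spectral_diag P) *m spectralmx P.
  rewrite -invmx_unitary ?spectral_unitarymx //.
  by apply/orthomx_spectralP/normalmxP; rewrite adjP.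
move: (spectralmx P) (spectral_diag P) (spectral_unitarymx P) Pdiag => X d uX Pdiag.
have DE : diag_mx d = uconj X P.
  by rewrite Pdiag /uconj !mulmxA (unitarymxP uX) mul1mx -mulmxA (unitarymxP uX) mulmx1.
exists X, d; split => //.
- move=> i; have /matrixP /(_ i i) : diag_mx d *m diag_mx d = diag_mx d.
    by rewrite DE (uconjM uX) PP.
  rewrite mul_diag_mx !mxE eqxx mulr1n => dii.
  have /eqP : d 0 i * (d 0 i - 1) = 0 by rewrite mulrBr mulr1 dii subrr.
  by rewrite mulf_eq0 subr_eq0 orbC !inE.
- by rewrite -mxtrace_diag DE (mxtrace_uconj uX).
Qed.

Lemma rank_proj_similar k (P Q : M) : rank_proj k P -> rank_proj k Q ->
  exists2 W, W \is unitarymx & Q = uconj W P.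
Proof.
move=> /rank_proj_diag [U1 [d1 [uU1 D1E d1_01 d1_sum]]].
move=> /rank_proj_diag [U2 [d2 [uU2 D2E d2_01 d2_sum]]].
have count_ones (d : 'rV[C]_n) : (forall i, d 0 i \in [:: 1; 0]) ->
    \sum_i d 0 i = (count_mem 1 [tuple d 0 i | i < n])%:R.
  move=> d01; rewrite -sum_zero_one; first by rewrite big_map big_enum.
  by apply/allP => _ /mapP [i _ ->]; apply: d01.
have [s d21] : exists s : 'S_n, forall i, d2 0 i = d1 0 (s i).
  apply: perm_two_valued => //; first exact: oner_neq0.
  by apply/eqP; rewrite -(eqr_nat C) -!count_ones // d1_sum d2_sum.
have us : (perm_mx s : M) \is unitarymx.
  by apply/unitarymxP; rewrite tr_perm_mx map_perm_mx -perm_mxM mulgV perm_mx1.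
have D21 : diag_mx d2 = uconj (perm_mx s) (diag_mx d1).
  rewrite /uconj tr_perm_mx map_perm_mx -row_permE -col_permE.
  by apply/matrixP => i j; rewrite !mxE d21 (inj_eq perm_inj).
exists (U2^t* *m perm_mx s *m U1); first by rewrite !mul_unitarymx ?trmxC_unitary.
by rewrite -(uconjK uU2 Q) -D2E D21 D1E !uconj_comp.
Qed.

Lemma spanSH_vspace k (P : M) : exists U, is_vspace_of (spanR (SH k P)) U.
Proof. by apply: exists_vspace_of; [exact: spanR0 | exact: spanR_lin]. Qed.

Lemma dimv_spanSH_leq k (P Q : M) UP UQ : rank_proj k P -> rank_proj k Q ->
  is_vspace_of (spanR (SH k P)) UP -> is_vspace_of (spanR (SH k Q)) UQ ->
  (\dim UP <= \dim UQ)%N.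
Proof.
move=> rP rQ hP; have [W uW ->] := rank_proj_similar rP rQ; move=> hQ.
apply: (dimv_leq_of_inj hP hQ (f := uconj W)) => [a A B _ _|A B _ _|A].
- exact: uconj_lin.
- exact/(can_inj (uconjK uW)).
- exact: spanSH_uconj uW.
Qed.

Lemma dimv_spanSH_eq k (P Q : M) UP UQ : rank_proj k P -> rank_proj k Q ->
  is_vspace_of (spanR (SH k P)) UP -> is_vspace_of (spanR (SH k Q)) UQ ->
  \dim UP = \dim UQ.
Proof.
move=> rP rQ hP hQ; apply/eqP.
by rewrite eqn_leq (dimv_spanSH_leq rP rQ hP hQ) (dimv_spanSH_leq rQ rP hQ hP).
Qed.

Section HermLinearBij.
Variable T : M -> M.
Hypothesis T_bij : herm_linear_bij T.

Lemma herm_linear_bijZ a (A : M) : herm A -> T (rC a *: A) = rC a *: T A.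
Proof. by case: T_bij => _ [_ [TZ _]]; apply: TZ. Qed.

Lemma herm_linear_bij_lin a (A B : M) : herm A -> herm B ->
  T (rC a *: A + B) = rC a *: T A + T B.
Proof.
move=> hA hB; have [_ [TD _]] := T_bij.
by rewrite TD ?herm_linear_bijZ //; apply: hermZ.
Qed.

Lemma herm_linear_bij0 : T 0 = 0.
Proof. by have := herm_linear_bijZ 0 herm0; rewrite scaler0 => ->; apply: scale0r. Qed.

Lemma spanR_herm_map (S Z : set M) : (forall B, S B -> herm B) ->
  (forall B, S B -> spanR Z (T B)) -> forall A, spanR S A -> spanR Z (T A).
Proof.
move=> Sh ST A SA.
suff [] : herm A /\ spanR Z (T A) by [].
apply: (spanR_ind (Z := fun A => herm A /\ spanR Z (T A))) SA.
- by rewrite herm_linear_bij0; split; [exact: herm0 | exact: spanR0].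
- move=> a A1 A2 [h1 s1] [h2 s2]; rewrite herm_linear_bij_lin //.
  by split; [apply: herm_lin | apply: spanR_lin].
- by move=> B SB; split; [apply: Sh | apply: ST].
Qed.

Lemma spanSH_preimage k (P Q : M) : rank_proj k P -> rank_proj k Q ->
  (forall A, spanR (SH k P) A -> spanR (SH k Q) (T A)) ->
  forall A, herm A -> spanR (SH k Q) (T A) -> spanR (SH k P) A.
Proof.
move=> rP rQ TPQ A hA TA.
have [UP hP] := spanSH_vspace k P; have [UQ hQ] := spanSH_vspace k Q.
have [_ [_ [_ [Tinj _]]]] := T_bij.
have [|||B PB TBA] := onto_of_dimv_leq hP hQ _ _ TPQ _ TA.
- by move=> a A1 A2 /spanSH_herm h1 /spanSH_herm h2; apply: herm_linear_bij_lin.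
- by move=> A1 A2 /spanSH_herm h1 /spanSH_herm h2; apply: Tinj.
- by rewrite (dimv_spanSH_eq rP rQ hP hQ).
by rewrite -(Tinj _ _ (spanSH_herm PB) hA TBA).
Qed.

Lemma image_scaleset_spanR (S Z : set M) t t' : t = 1 \/ t = -1 ->
  (forall B, S B -> herm B) -> T @` scaleset t S `<=` scaleset t' Z ->
  forall B, S B -> spanR Z (T B).
Proof.
move=> t_sign Sh TSZ B SB.
have [B' ZB' TB] : scaleset t' Z (T (rC t *: B)).
  by apply: TSZ; exists (rC t *: B) => //; exists B.
have t_sq : rC t * rC t = 1 by rewrite -rCM; case: t_sign => ->; rewrite ?mulrNN mulr1.
have -> : T B = rC t *: T (rC t *: B).
  by rewrite herm_linear_bijZ ?scalerA ?t_sq ?scale1r //; apply: Sh.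
by rewrite -TB; apply/spanRZ/spanRZ/spanR_sub.
Qed.

Lemma spanSH_image_sub k (P Q : M) t t' : t = 1 \/ t = -1 ->
  T @` scaleset t (SH k P) `<=` scaleset t' (SH k Q) ->
  forall A, spanR (SH k P) A -> spanR (SH k Q) (T A).
Proof.
move=> t_sign TPQ; apply: spanR_herm_map (@SH_herm k P) _.
exact: image_scaleset_spanR t_sign (@SH_herm k P) TPQ.
Qed.

End HermLinearBij.

End HermitianMatrices.

Theorem mainTheorem11 (R : realType) (n k : nat) (T : 'M[R[i]]_n -> 'M[R[i]]_n)
    (P1 P2 : 'M[R[i]]_n) (t1 t2 : R) :
  (1 <= k)%N -> (k < n)%N ->
  herm_linear_bij T ->
  rank_proj k P1 -> rank_proj k P2 ->
  spanR (SH k P1) <> spanR (SH k P2) ->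
  (t1 = 1 \/ t1 = -1) -> (t2 = 1 \/ t2 = -1) ->
  ~ (exists (Q : 'M[R[i]]_n) (t3 : R),
       rank_proj k Q /\ (t3 = 1 \/ t3 = -1) /\
       (T @` scaleset t1 (SH k P1)) `|` (T @` scaleset t2 (SH k P2))
         `<=` scaleset t3 (SH k Q)).
Proof.
move=> _ _ T_bij rP1 rP2 span_neq t1_sign t2_sign [Q [t3 [rQ [_]]]].
rewrite subUset => -[TPQ1 TPQ2].
have TP1 := spanSH_image_sub T_bij t1_sign TPQ1.
have TP2 := spanSH_image_sub T_bij t2_sign TPQ2.
apply: span_neq; apply/seteqP; split => A SA.
- exact: (spanSH_preimage T_bij rP2 rQ TP2 (spanSH_herm SA) (TP1 A SA)).
- exact: (spanSH_preimage T_bij rP1 rQ TP1 (spanSH_herm SA) (TP2 A SA)).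
Qed.
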